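(* Let $A=(a_{ij})_{i,j\in I}$ be a generalized Cartan matrix with finite index set $I$, and let $U=(u_{ij})_{i,j\in I}$ be a complex matrix satisfying: (0) $u_{ij}=0$ if $i=j$ or $a_{ij}=0$; (1) $u_{ij}=-u_{ji}$ if $(a_{ij},a_{ji})=(-1,-1)$; (2) $u_{ij}\in\{-u_{ji},-2u_{ji}\}$ if $(a_{ij},a_{ji})=(-2,-1)$; (3) $u_{ij}\in\{-u_{ji},-\tfrac32u_{ji},-2u_{ji},-3u_{ji}\}$ if $(a_{ij},a_{ji})=(-3,-1)$. For each $i\in I$ let $s_i$ be the $\mathbb{C}$-automorphism of the field $\mathbb{C}(\alpha;f)$ determined by $$s_i(\alpha_j)=\alpha_j-a_{ij}\alpha_i,\qquad s_i(f_j)=f_j+\frac{\alpha_i}{f_i}\,u_{ij}\qquad(j\in I).$$ Then $s_i\mapsto s_i$ defines a representation of the Coxeter group $W(A)$ on $\mathbb{C}(\alpha;f)$ by field automorphisms; i.e. $s_i^2=\mathrm{id}$ for all $i$ and $(s_is_j)^{m_{ij}}=\mathrm{id}$ for all $i\neq j$ with $m_{ij}<\infty$.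
   Context: A generalized Cartan matrix $A=(a_{ij})_{i,j\in I}$ is an integer matrix with $a_{jj}=2$, $a_{ij}\le 0$ for $i\ne j$, and $a_{ij}=0\iff a_{ji}=0$. $\mathbb{C}(\alpha;f)$ denotes the field of rational functions over $\mathbb{C}$ in independent variables $\alpha_j,f_j$ ($j\in I$). The Coxeter group $W(A)$ is generated by $s_i$ ($i\in I$) with relations $s_i^2=1$ and $(s_is_j)^{m_{ij}}=1$ for $i\neq j$, where $m_{ij}=2,3,4,6,\infty$ according as $a_{ij}a_{ji}=0,1,2,3,\ge4$ (no relation when $m_{ij}=\infty$). *)

(* C = complex numbers built as (Stdlib reals)[i],
   C(alpha;f) = fraction field of the multivariate polynomial ring C[X_0..X_{2n-1}],
   with alpha_j = X_j (j < n) and f_j = X_{n+j}. *)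
From HB Require Import structures.
From mathcomp Require Import all_boot all_order all_algebra.
From mathcomp Require Import fraction.
From mathcomp Require Import mpoly.
From mathcomp Require Import complex.
From mathcomp Require Import Rstruct.
Set Implicit Arguments. Unset Strict Implicit. Unset Printing Implicit Defensive.
Import GRing.Theory.
Local Open Scope ring_scope.

Definition RR : rcfType := Rdefinitions.R.
Definition CC : fieldType := complex RR.

Definition RatF (n : nat) := {fraction {mpoly CC[n + n]}}.

Definition alpha (n : nat) (j : 'I_n) : RatF n := tofrac ('X_(lshift n j)).
Definition fvar  (n : nat) (j : 'I_n) : RatF n := tofrac ('X_(rshift n j)).
Definition cst (n : nat) (c : CC) : RatF n := tofrac (c%:MP).

Definition is_gcm (n : nat) (A : 'M[int]_n) : Prop :=
  [/\ (forall j, A j j = 2%:Z),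
      (forall i j, i != j -> A i j <= 0) &
      (forall i j, A i j = 0 <-> A j i = 0)].

(* Coxeter exponent m_ij from the product a_ij a_ji; None encodes infinity *)
Definition coxeter_m (p : int) : option nat :=
  if p == 0 then Some 2%N
  else if p == 1 then Some 3%N
  else if p == 2%:Z then Some 4%N
  else if p == 3%:Z then Some 6%N
  else None.

Definition admissible_U (n : nat) (A : 'M[int]_n) (U : 'M[CC]_n) : Prop :=
  [/\ (forall i j, (i == j) || (A i j == 0) -> U i j = 0),
      (forall i j, A i j = -1 -> A j i = -1 -> U i j = - U j i),
      (forall i j, A i j = -2%:Z -> A j i = -1 ->
          U i j = - U j i \/ U i j = - (2%:R * U j i)) &
      (forall i j, A i j = -3%:Z -> A j i = -1 ->
          [\/ U i j = - U j i, U i j = - ((3%:R / 2%:R) * U j i),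
              U i j = - (2%:R * U j i) | U i j = - (3%:R * U j i)])].

Definition is_s (n : nat) (A : 'M[int]_n) (U : 'M[CC]_n) (i : 'I_n)
    (s : {rmorphism RatF n -> RatF n}) : Prop :=
  [/\ bijective s,
      (forall c : CC, s (cst n c) = cst n c),
      (forall j, s (alpha j) = alpha j - (A i j)%:~R * alpha i) &
      (forall j, s (fvar j) = fvar j + (alpha i / fvar i) * cst n (U i j))].

From HB Require Import structures.
From mathcomp Require Import all_boot all_order all_algebra.
From mathcomp Require Import fraction mpoly complex Rstruct.
From mathcomp Require Import generic_quotient ring zify.
From Stdlib Require Import ClassicalEpsilon.
Set Implicit Arguments. Unset Strict Implicit. Unset Printing Implicit Defensive.
Import GRing.Theory.
Local Open Scope ring_scope.

(* The substitution alpha_j |-> alpha_j - a_ij alpha_i, f_j |-> f_j + u_ij alpha_i / f_i of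
   C[alpha; f] into C(alpha; f) fixes f_i and takes values in the localization C[alpha; f][1/f_i],
   on which it has a left inverse; so it is injective and extends to the fraction field, giving s_i.
   A ring endomorphism of C(alpha; f) fixing the constants and all alpha_j, f_j is the identity:
   this gives s_i^2 = 1 and reduces (s_i s_j)^m = 1 to the generators.
   Put T = s_i s_j. As T alpha_k - alpha_k is a constant combination of alpha_i, alpha_j and
   T f_k - f_k = u_ik alpha_i / f_i + u_jk s_i (alpha_j / f_j), telescoping reduces T^m = 1 to the
   vanishing of the sums over t < m of T^t applied to alpha_i, alpha_j, alpha_i / f_i and
   s_i (alpha_j / f_j). The first two are sums over the orbits of the rank-two root system. For the
   others, pi = f_i f_j moves affinely, T pi = pi + u_ij alpha_i + u_ji (alpha_j - a_ij alpha_i),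
   and T f_i = f_i T pi / s_i pi; so T^m f_i = f_i is the identity
   prod_(t < m) T^(t+1) pi = prod_(t < m) T^t (s_i pi) between products of affine forms, which is
   where conditions (1)-(3) on U enter. Then T^m f_j = f_j as well, and telescoping
   T f_j - f_j = u_ij alpha_i / f_i and T f_i - f_i = u_ji s_i (alpha_j / f_j) gives the last two
   sums. *)

(** * Extending morphisms to fraction fields *)

Lemma tofrac_repr (R : idomainType) (x : {fraction R}) :
  x = tofrac \n_(repr x) / tofrac \d_(repr x).
Proof.
rewrite -[x in LHS]reprK; set r := repr x.
have d_neq0 : tofrac \d_r != 0 :> {fraction R} by rewrite tofrac_eq0 denom_ratioP.
apply: (canRL (mulfK d_neq0)); unlock tofrac.
rewrite -[_ * _]FracField.pi_mul; apply/eqmodP.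
by rewrite /= FracField.equivfE /FracField.mulf !numden_Ratio ?mulr1 ?oner_neq0
  ?mulf_neq0 ?denom_ratioP // mulrC.
Qed.

Lemma tofrac_div_eq (R : idomainType) (a b c d : R) : b != 0 -> d != 0 ->
  (tofrac a / tofrac b == tofrac c / tofrac d :> {fraction R}) = (a * d == c * b).
Proof. by move=> b_neq0 d_neq0; rewrite eqr_div ?tofrac_eq0 // -!rmorphM tofrac_eq. Qed.

Section FractionLift.
Variables (R : idomainType) (F : fieldType) (f : {rmorphism R -> F}).
Hypothesis f_inj : injective f.

Let rmorph_neq0 c : c != 0 -> f c != 0.
Proof. by move=> c_neq0; rewrite raddf_eq0. Qed.

(* The injectivity proof is an argument only so that the morphism instances below can ask for it. *)
Definition frac_lift of injective f := fun x : {fraction R} => f \n_(repr x) / f \d_(repr x).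

Local Notation lift := (frac_lift f_inj).

Lemma frac_lift_div a b : b != 0 -> lift (tofrac a / tofrac b) = f a / f b.
Proof.
move=> b_neq0; rewrite /frac_lift; set r := repr _.
have r_neq0 := denom_ratioP r.
have := tofrac_repr (tofrac a / tofrac b); rewrite -/r => /eqP.
rewrite tofrac_div_eq // => /eqP /(congr1 f) e.
by apply/eqP; rewrite eqr_div ?rmorph_neq0 // -!rmorphM -e.
Qed.

Lemma frac_lift_tofrac a : lift (tofrac a) = f a.
Proof. by rewrite -[tofrac a]divr1 -tofrac1 frac_lift_div ?oner_neq0 // rmorph1 divr1. Qed.

Lemma frac_lift_is_zmod_morphism : zmod_morphism lift.
Proof.
move=> x y; rewrite (tofrac_repr x) (tofrac_repr y).
have b_neq0 := denom_ratioP (repr x); have d_neq0 := denom_ratioP (repr y).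
rewrite -mulNr -tofracN addf_div ?tofrac_eq0 // -!rmorphM -rmorphD.
rewrite !frac_lift_div ?mulf_neq0 // -mulNr -(rmorphN f) addf_div ?rmorph_neq0 //.
by rewrite rmorphD !rmorphM.
Qed.

Lemma frac_lift_is_monoid_morphism : monoid_morphism lift.
Proof.
split; first by rewrite -tofrac1 frac_lift_tofrac rmorph1.
move=> x y; rewrite (tofrac_repr x) (tofrac_repr y) mulf_div -!rmorphM.
by rewrite !frac_lift_div ?mulf_neq0 ?denom_ratioP // !rmorphM mulf_div.
Qed.

End FractionLift.

HB.instance Definition _ (R : idomainType) (F : fieldType) (f : {rmorphism R -> F})
    (f_inj : injective f) :=
  GRing.isZmodMorphism.Build _ _ (frac_lift f_inj) (frac_lift_is_zmod_morphism f_inj).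
HB.instance Definition _ (R : idomainType) (F : fieldType) (f : {rmorphism R -> F})
    (f_inj : injective f) :=
  GRing.isMonoidMorphism.Build _ _ (frac_lift f_inj) (frac_lift_is_monoid_morphism f_inj).

Lemma mpoly_ring_ind (R : nzRingType) (k : nat) (P : {mpoly R[k]} -> Prop) :
  (forall c, P c%:MP) -> (forall v, P 'X_v) ->
  (forall p q, P p -> P q -> P (p + q)) -> (forall p q, P p -> P q -> P (p * q)) ->
  forall p, P p.
Proof.
move=> PC PX PD PM p; rewrite [p]mpolyE.
apply: big_ind => [||m _]; [by rewrite -mpolyC0 | exact: PD |].
rewrite -mul_mpolyC mpolyXE_id; apply: (PM) => //.
apply: big_ind => [||v _]; [by rewrite -mpolyC1 | exact: (PM) |].
by elim: (m v) => [|e IHe]; rewrite ?expr0 -?mpolyC1 // exprS; apply: PM.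
Qed.

Lemma mpoly_morph_ext (R : nzRingType) (k : nat) (S : pzRingType) (g h : {mpoly R[k]} -> S) :
  {morph g : x y / x + y} -> {morph g : x y / x * y} ->
  {morph h : x y / x + y} -> {morph h : x y / x * y} ->
  (forall c, g c%:MP = h c%:MP) -> (forall v, g 'X_v = h 'X_v) -> g =1 h.
Proof.
move=> gD gM hD hM eqC eqX; apply: mpoly_ring_ind => // p q.
- by rewrite gD hD => -> ->.
- by rewrite gM hM => -> ->.
Qed.

Lemma fraction_mpoly_rmorph_id (R : idomainType) (k : nat)
    (h : {rmorphism {fraction {mpoly R[k]}} -> {fraction {mpoly R[k]}}}) :
  (forall c, h (tofrac c%:MP) = tofrac c%:MP) -> (forall v, h (tofrac 'X_v) = tofrac 'X_v) ->
  h =1 id.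
Proof.
move=> hC hX.
have h_tofrac : (fun p => h (tofrac p)) =1 (fun p => tofrac p).
  by apply: mpoly_morph_ext => // [p q|p q|p q|p q]; rewrite ?rmorphD ?rmorphM.
by move=> x; rewrite (tofrac_repr x) fmorph_div /= !h_tofrac.
Qed.

Lemma addf_div_pow (F : fieldType) (c x y : F) k l : c != 0 ->
  x / c ^+ k + y / c ^+ l = (x * c ^+ l + y * c ^+ k) / c ^+ (k + l).
Proof. by move=> c_neq0; rewrite addf_div ?expf_neq0 // exprD. Qed.

Section LocalizationLift.
Variables (R : idomainType) (phi : {rmorphism R -> {fraction R}}) (d : R).
Hypotheses (d_neq0 : d != 0) (phi_d : phi d = tofrac d).
Local Notation D := (tofrac d : {fraction R}).

Let D_neq0 : D != 0. Proof. by rewrite tofrac_eq0. Qed.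

Let phi_expD k : phi (d ^+ k) = D ^+ k. Proof. by rewrite rmorphXn phi_d. Qed.

Definition localized (y : {fraction R}) := exists q k, y = tofrac q / D ^+ k.

Lemma localized_tofrac q : localized (tofrac q).
Proof. by exists q, 0%N; rewrite expr0 divr1. Qed.

Lemma tofrac_addf_div_pow q k r l :
  tofrac q / D ^+ k + tofrac r / D ^+ l = tofrac (q * d ^+ l + r * d ^+ k) / D ^+ (k + l).
Proof. by rewrite addf_div_pow ?D_neq0 // tofracD !tofracM !tofracXn. Qed.

Lemma localizedD y z : localized y -> localized z -> localized (y + z).
Proof.
move=> [q [k ->]] [r [l ->]].
by rewrite tofrac_addf_div_pow; exists (q * d ^+ l + r * d ^+ k), (k + l)%N.
Qed.

Lemma localizedM y z : localized y -> localized z -> localized (y * z).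
Proof.
by move=> [q [k ->]] [r [l ->]]; exists (q * r), (k + l)%N; rewrite mulf_div -exprD rmorphM.
Qed.

(* The extension q / d^k |-> phi q / d^k of phi to the localization at d; junk elsewhere. *)
Definition loc_lift (y : {fraction R}) : {fraction R} :=
  let qk := epsilon (inhabits (0, 0%N)) (fun qk => y = tofrac qk.1 / D ^+ qk.2) in
  phi qk.1 / D ^+ qk.2.

Lemma loc_liftE q k : loc_lift (tofrac q / D ^+ k) = phi q / D ^+ k.
Proof.
rewrite /loc_lift; set qk := epsilon _ _.
have e : q * d ^+ qk.2 = qk.1 * d ^+ k.
  apply/eqP; rewrite -tofrac_div_eq ?expf_neq0 // !tofracXn; apply/eqP.
  by apply: (epsilon_spec _ (fun qk => _ = tofrac qk.1 / D ^+ qk.2)); exists (q, k).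
by apply/eqP; rewrite eqr_div ?expf_neq0 ?D_neq0 // -!phi_expD -!rmorphM e.
Qed.

Lemma loc_lift_tofrac q : loc_lift (tofrac q) = phi q.
Proof. by have := loc_liftE q 0; rewrite expr0 !divr1. Qed.

Lemma loc_liftD y z : localized y -> localized z -> loc_lift (y + z) = loc_lift y + loc_lift z.
Proof.
move=> [q [k ->]] [r [l ->]].
rewrite tofrac_addf_div_pow !loc_liftE addf_div_pow ?D_neq0 //.
by rewrite rmorphD !rmorphM !phi_expD.
Qed.

Lemma loc_liftM y z : localized y -> localized z -> loc_lift (y * z) = loc_lift y * loc_lift z.
Proof.
move=> [q [k ->]] [r [l ->]].
by rewrite mulf_div -exprD -rmorphM !loc_liftE rmorphM mulf_div exprD.
Qed.

End LocalizationLift.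

(** * The reflections s_i *)

Lemma cst_is_zmod_morphism n : zmod_morphism (cst n).
Proof. by move=> a b; rewrite /cst mpolyCB rmorphB. Qed.
HB.instance Definition _ n :=
  GRing.isZmodMorphism.Build CC (RatF n) (cst n) (cst_is_zmod_morphism n).

Lemma cst_is_monoid_morphism n : monoid_morphism (cst n).
Proof. by split=> [|a b]; rewrite /cst ?mpolyC1 ?mpolyCM (rmorph1, rmorphM). Qed.
HB.instance Definition _ n :=
  GRing.isMonoidMorphism.Build CC (RatF n) (cst n) (cst_is_monoid_morphism n).

Lemma mpolyX_neq0 (R : nzRingType) (k : nat) (v : 'I_k) : 'X_v != 0 :> {mpoly R[k]}.
Proof. by apply/eqP => /(congr1 (mcoeff U_(v)%MM)) /eqP; rewrite mcoeffX eqxx mcoeff0 oner_eq0. Qed.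

Lemma fvar_neq0 n (j : 'I_n) : fvar j != 0. Proof. by rewrite tofrac_eq0 mpolyX_neq0. Qed.

Lemma ratf_rmorph_id n (h : {rmorphism RatF n -> RatF n}) :
  (forall c, h (cst n c) = cst n c) -> (forall j, h (alpha j) = alpha j) ->
  (forall j, h (fvar j) = fvar j) -> h =1 id.
Proof.
move=> hC hA hF; apply: fraction_mpoly_rmorph_id => // v.
by case: (split_ordP v) => j ->; [exact: hA | exact: hF].
Qed.

Lemma reflection_involutive n (A : 'M[int]_n) (U : 'M[CC]_n) (i : 'I_n)
    (s : {rmorphism RatF n -> RatF n}) :
  A i i = 2%:Z -> U i i = 0 ->
  (forall c, s (cst n c) = cst n c) ->
  (forall j, s (alpha j) = alpha j - (A i j)%:~R * alpha i) ->
  (forall j, s (fvar j) = fvar j + alpha i / fvar i * cst n (U i j)) ->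
  forall x, s (s x) = x.
Proof.
move=> Aii Uii sC sA sF.
have s_alpha_self : s (alpha i) = - alpha i by rewrite sA Aii; ring.
have s_fvar_self : s (fvar i) = fvar i by rewrite sF Uii rmorph0 mulr0 addr0.
apply: (ratf_rmorph_id (h := (s \o s)%FUN)) => [c|j|j] /=; first by rewrite !sC.
  by rewrite sA rmorphB rmorphM rmorph_int sA s_alpha_self; ring.
by rewrite sF rmorphD !rmorphM fmorphV sF sC s_fvar_self s_alpha_self mulNr mulNr addrK.
Qed.

Section Reflection.
Variables (n : nat) (A : 'M[int]_n) (U : 'M[CC]_n) (i : 'I_n).
Hypotheses (Aii : A i i = 2%:Z) (Uii : U i i = 0).
Local Notation Xa j := ('X_(lshift n j) : {mpoly CC[n + n]}).
Local Notation Xf j := ('X_(rshift n j) : {mpoly CC[n + n]}).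

Let Xf_neq0 : Xf i != 0 := mpolyX_neq0 _ _.

Definition refl_image (v : 'I_(n + n)) : RatF n :=
  match split v with
  | inl j => alpha j - (A i j)%:~R * alpha i
  | inr j => fvar j + alpha i / fvar i * cst n (U i j)
  end.

Definition refl_poly : {rmorphism {mpoly CC[n + n]} -> RatF n} := mmap (cst n) refl_image.

Lemma refl_poly_C c : refl_poly c%:MP = cst n c.
Proof. exact: mmapC. Qed.

Lemma refl_poly_X v : refl_poly 'X_v = refl_image v.
Proof. by have := mmapX refl_image (cst n) U_(v)%MM; rewrite mmap1U. Qed.

Lemma refl_poly_alpha j : refl_poly (Xa j) = alpha j - (A i j)%:~R * alpha i.
Proof. by rewrite refl_poly_X /refl_image (unsplitK (inl _ j)). Qed.

Lemma refl_poly_fvar j : refl_poly (Xf j) = fvar j + alpha i / fvar i * cst n (U i j).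
Proof. by rewrite refl_poly_X /refl_image (unsplitK (inr _ j)). Qed.

Lemma refl_poly_alpha_self : refl_poly (Xa i) = - alpha i.
Proof. by rewrite refl_poly_alpha Aii; ring. Qed.

Lemma refl_poly_fvar_self : refl_poly (Xf i) = fvar i.
Proof. by rewrite refl_poly_fvar Uii rmorph0 mulr0 addr0. Qed.

Lemma refl_image_fvar_frac j : fvar j + alpha i / fvar i * cst n (U i j) =
  tofrac (Xf j * Xf i + (U i j)%:MP * Xa i) / fvar i ^+ 1.
Proof.
have shift (F : fieldType) (x a c y : F) : y != 0 -> x + a / y * c = (x * y + c * a) / y ^+ 1.
  by move=> y_neq0; rewrite expr1; field.
by rewrite shift ?fvar_neq0 // tofracD !tofracM.
Qed.

Lemma refl_poly_localized p : localized (Xf i) (refl_poly p).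
Proof.
elim/mpoly_ring_ind: p => [c|v|p q hp hq|p q hp hq].
- by rewrite refl_poly_C; exact: localized_tofrac.
- case: (split_ordP v) => j ->; last by rewrite refl_poly_fvar refl_image_fvar_frac; do 2!eexists.
  rewrite refl_poly_alpha -(rmorph_int (@tofrac _)) -tofracM -tofracB.
  exact: localized_tofrac.
- by rewrite rmorphD; exact: localizedD.
- by rewrite rmorphM; exact: localizedM.
Qed.

Local Notation unrefl := (loc_lift refl_poly (Xf i)).

Lemma unrefl_refl_poly p : unrefl (refl_poly p) = tofrac p.
Proof.
have morphD : {morph (fun p => unrefl (refl_poly p)) : p q / p + q}.
  move=> p1 p2 /=; rewrite rmorphD.
  exact: (loc_liftD Xf_neq0 refl_poly_fvar_self (refl_poly_localized _) (refl_poly_localized _)).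
have morphM : {morph (fun p => unrefl (refl_poly p)) : p q / p * q}.
  move=> p1 p2 /=; rewrite rmorphM.
  exact: (loc_liftM Xf_neq0 refl_poly_fvar_self (refl_poly_localized _) (refl_poly_localized _)).
have lift_tofrac := loc_lift_tofrac Xf_neq0 refl_poly_fvar_self.
apply: (mpoly_morph_ext morphD morphM) => [p1 p2|p1 p2|c|v] /=;
  rewrite ?tofracD ?tofracM //.
  by rewrite refl_poly_C lift_tofrac refl_poly_C.
case: (split_ordP v) => j ->.
  rewrite refl_poly_alpha -(rmorph_int (@tofrac _)) -tofracM -tofracB lift_tofrac.
  by rewrite rmorphB rmorphM rmorph_int refl_poly_alpha refl_poly_alpha_self; ring.
rewrite refl_poly_fvar refl_image_fvar_frac (loc_liftE Xf_neq0 refl_poly_fvar_self).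
rewrite rmorphD !rmorphM refl_poly_C.
rewrite refl_poly_fvar refl_poly_fvar_self refl_poly_alpha_self expr1 -/(fvar i) -/(fvar j).
have unshift (F : fieldType) (x a c y : F) : y != 0 -> ((x + a / y * c) * y + c * - a) / y = x.
  by move=> y_neq0; field.
exact/unshift/fvar_neq0.
Qed.

Lemma refl_poly_inj : injective refl_poly.
Proof.
by move=> p q /(congr1 unrefl); rewrite !unrefl_refl_poly => /eqP; rewrite tofrac_eq => /eqP.
Qed.

Definition reflection : {rmorphism RatF n -> RatF n} := frac_lift refl_poly_inj.

Lemma reflection_tofrac p : reflection (tofrac p) = refl_poly p.
Proof. exact: frac_lift_tofrac. Qed.

Lemma reflection_is_s : is_s A U i reflection.
Proof.
have sC c : reflection (cst n c) = cst n c by rewrite /cst reflection_tofrac refl_poly_C.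
have sA j : reflection (alpha j) = alpha j - (A i j)%:~R * alpha i.
  by rewrite [in LHS]/alpha reflection_tofrac refl_poly_alpha.
have sF j : reflection (fvar j) = fvar j + alpha i / fvar i * cst n (U i j).
  by rewrite [in LHS]/fvar reflection_tofrac refl_poly_fvar.
have sK := reflection_involutive Aii Uii sC sA sF.
by split=> //; exists reflection.
Qed.

End Reflection.

(** * Braid relations in rank two *)

Fixpoint rmorph_iter (R : pzRingType) (f : {rmorphism R -> R}) (t : nat) : {rmorphism R -> R} :=
  if t is t'.+1 then (f \o rmorph_iter f t')%FUN else idfun.

Section RmorphIter.
Variables (R : pzRingType) (f : {rmorphism R -> R}).

Lemma rmorph_iterE t x : rmorph_iter f t x = iter t f x.
Proof. by elim: t => //= t ->. Qed.

Lemma rmorph_iterSr t x : rmorph_iter f t.+1 x = rmorph_iter f t (f x).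
Proof. by rewrite !rmorph_iterE iterSr. Qed.

Lemma rmorph_iter_fix t c : f c = c -> rmorph_iter f t c = c.
Proof. by move=> fc; elim: t => //= t ->. Qed.

Lemma rmorph_iter_telescope m x :
  rmorph_iter f m x - x = \sum_(t < m) rmorph_iter f t (f x - x).
Proof.
elim: m => [|m IHm]; first by rewrite big_ord0 subrr.
by rewrite big_ord_recr /= -IHm rmorphB -rmorph_iterSr addrC addrA subrK.
Qed.

Lemma rmorph_iter_fix_orbit_sums m x y c d z :
  f c = c -> f d = d -> f z - z = c * x + d * y ->
  \sum_(t < m) rmorph_iter f t x = 0 -> \sum_(t < m) rmorph_iter f t y = 0 ->
  rmorph_iter f m z = z.
Proof.
move=> fc fd fz Sx Sy; apply/eqP; rewrite -subr_eq0 rmorph_iter_telescope fz.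
rewrite (eq_bigr (fun t : 'I_m => c * rmorph_iter f t x + d * rmorph_iter f t y)).
  by rewrite big_split /= -!mulr_sumr Sx Sy !mulr0 addr0.
by move=> t _; rewrite rmorphD !rmorphM (rmorph_iter_fix _ fc) (rmorph_iter_fix _ fd).
Qed.

End RmorphIter.

Lemma prod_telescope (F : fieldType) (x P Q : nat -> F) m :
  (forall t, x t.+1 * Q t = x t * P t.+1) ->
  x m * \prod_(t < m) Q t = x 0%N * \prod_(t < m) P t.+1.
Proof.
move=> xS; elim: m => [|m IHm]; first by rewrite !big_ord0.
by rewrite !big_ord_recr /= mulrA [RHS]mulrA -IHm mulrAC xS mulrAC.
Qed.

(* Finite-type rank-two data allowed by conditions (0)-(3), with m = m_ij; B2 and G2 are listed
   with a_ji = -1 only. *)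
Definition rank2_admissible (F : fieldType) (aij aji : int) (uij uji : F) (m : nat) : Prop :=
  [\/ [/\ aij = 0, aji = 0, uij = 0, uji = 0 & m = 2%N],
      [/\ aij = -1, aji = -1, uij = - uji & m = 3%N],
      [/\ aij = -2, aji = -1, uij = - uji \/ uij = - (2%:R * uji) & m = 4%N] |
      [/\ aij = -3, aji = -1,
          [\/ uij = - uji, uij = - (3%:R / 2%:R * uji), uij = - (2%:R * uji)
            | uij = - (3%:R * uji)]
        & m = 6%N]].

Lemma rank2_admissible_eq0 (F : fieldType) aij aji (uij uji : F) m :
  has_char0 F -> rank2_admissible aij aji uij uji m -> (uij == 0) = (uji == 0).
Proof.
move=> /pcharf0P char0.
by case=> [[_ _ -> -> _]|[_ _ -> _]|[_ _ [|] -> _]|[_ _ [|||] -> _]];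
  rewrite ?oppr_eq0 ?mulf_eq0 ?invr_eq0 ?char0.
Qed.

Lemma rank2_orbit_identities (F : fieldType) aij aji (uij uji : F) m (a b P : nat -> F) :
  has_char0 F ->
  (forall t, a t.+1 = - a t - aji%:~R * (b t - aij%:~R * a t)) ->
  (forall t, b t.+1 = - (b t - aij%:~R * a t)) ->
  (forall t, P t.+1 = P t + uij * a t + uji * (b t - aij%:~R * a t)) ->
  rank2_admissible aij aji uij uji m ->
  [/\ \sum_(t < m) a t = 0, \sum_(t < m) b t = 0 &
      \prod_(t < m) P t.+1 = \prod_(t < m) (P t + uij * a t)].
Proof.
(* Unrolling the recurrences down to t = 0 leaves polynomial identities in a 0, b 0, P 0, u_ji. *)
move=> /pcharf0P char0 aS bS PS; have two_neq0 : (2%:R : F) != 0 by rewrite char0.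
case=> [[? ? ? ? ?]|[? ? ? ?]|[? ? uij_eq ?]|[? ? uij_eq ?]]; subst;
  rewrite !(big_ord_recr, big_ord0) /=; do 6 rewrite ?aS ?bS ?PS.
- by split; ring.
- by split; ring.
- by case: uij_eq => ->; split; ring.
- by case: uij_eq => ->; split; try ring; field.
Qed.

Section DihedralOrbit.
Variables (F : fieldType) (si sj : {rmorphism F -> F}).
Variables (aij aji : int) (uij uji : F) (ai aj fi fj : F).
Hypotheses (char0 : has_char0 F) (fi_neq0 : fi != 0) (fj_neq0 : fj != 0).
Hypotheses (si_ai : si ai = - ai) (si_aj : si aj = aj - aij%:~R * ai).
Hypotheses (sj_ai : sj ai = ai - aji%:~R * aj) (sj_aj : sj aj = - aj).
Hypotheses (si_fi : si fi = fi) (si_fj : si fj = fj + ai / fi * uij).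
Hypotheses (sj_fi : sj fi = fi + aj / fj * uji) (sj_fj : sj fj = fj).
Hypotheses (si_uij : si uij = uij) (si_uji : si uji = uji).
Hypotheses (sj_uij : sj uij = uij) (sj_uji : sj uji = uji).

Let T : {rmorphism F -> F} := (si \o sj)%FUN.
Local Notation Tt t := (rmorph_iter T t).

Let T_uij : T uij = uij. Proof. by rewrite /= sj_uij si_uij. Qed.
Let T_uji : T uji = uji. Proof. by rewrite /= sj_uji si_uji. Qed.

Lemma dihedral_ai t : Tt t.+1 ai = - Tt t ai - aji%:~R * (Tt t aj - aij%:~R * Tt t ai).
Proof.
rewrite rmorph_iterSr /= sj_ai rmorphB rmorphM rmorph_int si_ai si_aj.
by rewrite rmorphB rmorphN !rmorphM !rmorph_int rmorphB rmorphM rmorph_int.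
Qed.

Lemma dihedral_aj t : Tt t.+1 aj = - (Tt t aj - aij%:~R * Tt t ai).
Proof. by rewrite rmorph_iterSr /= sj_aj rmorphN si_aj rmorphN rmorphB rmorphM rmorph_int. Qed.

Let T_prod : T (fi * fj) = fi * fj + uij * ai + uji * (aj - aij%:~R * ai).
Proof.
have cancel_div (x y a c : F) : y != 0 -> (x + a / y * c) * y = x * y + a * c.
  by move=> y_neq0; field.
rewrite /= rmorphM sj_fi sj_fj rmorphM rmorphD !rmorphM fmorphV cancel_div ?fmorph_eq0 //.
by rewrite si_fi si_fj si_aj si_uji; field.
Qed.

Lemma dihedral_prod t : Tt t.+1 (fi * fj) =
  Tt t (fi * fj) + uij * Tt t ai + uji * (Tt t aj - aij%:~R * Tt t ai).
Proof.
rewrite rmorph_iterSr T_prod !rmorphD !rmorphM rmorphB rmorphM rmorph_int.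
by rewrite !(rmorph_iter_fix _ T_uij, rmorph_iter_fix _ T_uji).
Qed.

(* T f_i * s_i (f_i f_j) = f_i * T (f_i f_j), both sides being s_i (s_j f_i * f_i * f_j). *)
Lemma dihedral_fi t : Tt t.+1 fi * Tt t (si (fi * fj)) = Tt t fi * Tt t.+1 (fi * fj).
Proof.
have T_fi : T fi * si (fi * fj) = si fi * T (fi * fj).
  by rewrite /= -!rmorphM [sj (_ * _)]rmorphM sj_fj; congr (si _); ring.
by rewrite !rmorph_iterSr -!rmorphM T_fi si_fi.
Qed.

Let si_prod : si (fi * fj) = fi * fj + uij * ai.
Proof. by rewrite rmorphM si_fi si_fj; field. Qed.

Let T_fi_sub : T fi - fi = si (aj / fj) * uji.
Proof. by rewrite /= sj_fi rmorphD rmorphM si_fi si_uji addrC addKr. Qed.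

Let T_fj_sub : T fj - fj = ai / fi * uij.
Proof. by rewrite /= sj_fj si_fj addrC addKr. Qed.

Lemma dihedral_orbit_sums m : rank2_admissible aij aji uij uji m ->
  [/\ \sum_(t < m) Tt t ai = 0, \sum_(t < m) Tt t aj = 0,
      \sum_(t < m) Tt t (ai / fi) = 0 & \sum_(t < m) Tt t (si (aj / fj)) = 0].
Proof.
move=> adm.
have [Sa Sb Sprod] := rank2_orbit_identities (a := fun t => Tt t ai) (b := fun t => Tt t aj)
  (P := fun t => Tt t (fi * fj)) char0 dihedral_ai dihedral_aj dihedral_prod adm.
have [uji0|uji_neq0] := eqVneq uji 0.
  have uij0 : uij = 0 by apply/eqP; rewrite (rank2_admissible_eq0 char0 adm) uji0.
  have Tt_fi t : Tt t fi = fi.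
    by apply: rmorph_iter_fix; apply/eqP; rewrite -subr_eq0 T_fi_sub uji0 mulr0.
  have si_fj' : si fj = fj by rewrite si_fj uij0 mulr0 addr0.
  split=> //.
    rewrite (eq_bigr (fun t : 'I_m => Tt t ai / fi)) -?mulr_suml ?Sa ?mul0r //.
    by move=> t _; rewrite fmorph_div Tt_fi.
  rewrite (eq_bigr (fun t : 'I_m => (Tt t aj - aij%:~R * Tt t ai) / fj)).
    by rewrite -mulr_suml sumrB -mulr_sumr Sa Sb mulr0 subr0 mul0r.
  move=> t _; rewrite fmorph_div si_aj si_fj' fmorph_div rmorphB rmorphM rmorph_int.
  by rewrite (rmorph_iter_fix _ (_ : T fj = fj)) // /= sj_fj si_fj'.
have uij_neq0 : uij != 0 by rewrite (rank2_admissible_eq0 char0 adm).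
have Tm_fi : Tt m fi = fi.
  have Q_neq0 : \prod_(t < m) Tt t (si (fi * fj)) != 0.
    by apply/prodf_neq0 => t _; rewrite !fmorph_eq0; exact: mulf_neq0.
  apply: (mulIf Q_neq0).
  rewrite (prod_telescope (P := fun t => Tt t (fi * fj)) _ dihedral_fi) Sprod.
  congr (_ * _); apply: eq_bigr => t _.
  by rewrite si_prod rmorphD [Tt t (uij * ai)]rmorphM (rmorph_iter_fix _ T_uij).
have Tm_prod : Tt m (fi * fj) = fi * fj.
  apply: (rmorph_iter_fix_orbit_sums (c := uij - uji * aij%:~R) (d := uji) _ _ _ Sa Sb).
  - by rewrite rmorphB rmorphM rmorph_int T_uij T_uji.
  - exact: T_uji.
  - by rewrite T_prod; ring.
have Tm_fj : Tt m fj = fj.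
  by apply: (mulfI fi_neq0); rewrite -{1}Tm_fi -rmorphM.
split=> //.
  have := rmorph_iter_telescope T m fj; rewrite Tm_fj subrr T_fj_sub.
  under eq_bigr do rewrite [Tt _ (_ * uij)]rmorphM (rmorph_iter_fix _ T_uij).
  by rewrite -mulr_suml => /esym/eqP; rewrite mulf_eq0 (negbTE uij_neq0) orbF => /eqP.
have := rmorph_iter_telescope T m fi; rewrite Tm_fi subrr T_fi_sub.
under eq_bigr do rewrite [Tt _ (_ * uji)]rmorphM (rmorph_iter_fix _ T_uji).
by rewrite -mulr_suml => /esym/eqP; rewrite mulf_eq0 (negbTE uji_neq0) orbF => /eqP.
Qed.

End DihedralOrbit.

(** * The Coxeter relations *)

Lemma ratf_char0 n : has_char0 (RatF n).
Proof.
apply/pcharf0P => k; rewrite -(rmorph_nat (cst n)) /cst tofrac_eq0 mpolyC_eq0.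
by rewrite Num.Theory.pnatr_eq0.
Qed.

Section CoxeterRelations.
Variables (n : nat) (A : 'M[int]_n) (U : 'M[CC]_n).
Variable s : 'I_n -> {rmorphism RatF n -> RatF n}.
Hypotheses (s_refl : forall i, is_s A U i (s i)).
Hypotheses (Aii : forall i, A i i = 2%:Z) (Uii : forall i, U i i = 0).

Lemma s_cst i c : s i (cst n c) = cst n c. Proof. by case: (s_refl i). Qed.
Lemma s_alpha i j : s i (alpha j) = alpha j - (A i j)%:~R * alpha i.
Proof. by case: (s_refl i). Qed.
Lemma s_fvar i j : s i (fvar j) = fvar j + alpha i / fvar i * cst n (U i j).
Proof. by case: (s_refl i). Qed.
Lemma s_alpha_self i : s i (alpha i) = - alpha i.
Proof. by rewrite s_alpha Aii; ring. Qed.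
Lemma s_fvar_self i : s i (fvar i) = fvar i.
Proof. by rewrite s_fvar Uii rmorph0 mulr0 addr0. Qed.

Lemma s_involutive i x : s i (s i x) = x.
Proof. exact: (reflection_involutive (Aii i) (Uii i) (s_cst i) (s_alpha i) (s_fvar i) x). Qed.

Lemma coxeter_pair_relation i j m :
  rank2_admissible (A i j) (A j i) (cst n (U i j)) (cst n (U j i)) m ->
  forall x, iter m (fun y => s i (s j y)) x = x.
Proof.
move=> adm; have [Sa Sb Sf Sg] := dihedral_orbit_sums (ratf_char0 n) (fvar_neq0 i) (fvar_neq0 j)
  (s_alpha_self i) (s_alpha i j) (s_alpha j i) (s_alpha_self j)
  (s_fvar_self i) (s_fvar i j) (s_fvar j i) (s_fvar_self j)
  (s_cst i _) (s_cst i _) (s_cst j _) (s_cst j _) adm.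
set T : {rmorphism RatF n -> RatF n} := (s i \o s j)%FUN.
have T_cst c : T (cst n c) = cst n c by rewrite /= !s_cst.
move=> x; rewrite -(rmorph_iterE T); move: x.
apply: ratf_rmorph_id => [c|k|k]; first exact: rmorph_iter_fix.
  apply: (rmorph_iter_fix_orbit_sums (c := (A j k)%:~R * (A i j)%:~R - (A i k)%:~R)
                            (d := - (A j k)%:~R) _ _ _ Sa Sb).
  - by rewrite rmorphB rmorphM !rmorph_int.
  - by rewrite rmorphN rmorph_int.
  - by rewrite /= s_alpha rmorphB rmorphM rmorph_int !s_alpha; ring.
apply: (rmorph_iter_fix_orbit_sums (c := cst n (U i k)) (d := cst n (U j k)) _ _ _ Sf Sg) => //.
rewrite /= s_fvar rmorphD [s i (_ * cst n _)]rmorphM s_fvar s_cst; ring.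
Qed.

Lemma coxeter_relation_sym i j m :
  (forall x, iter m (fun y => s j (s i y)) x = x) ->
  forall x, iter m (fun y => s i (s j y)) x = x.
Proof.
move=> rel x.
have conj w : iter m (fun y => s i (s j y)) (s i w) = s i (iter m (fun y => s j (s i y)) w).
  by elim: m {rel} => //= m ->.
by rewrite -[x in LHS](s_involutive i) conj rel s_involutive.
Qed.

End CoxeterRelations.

Lemma neg_factor_cases (a b : int) : a <= 0 -> b <= 0 -> 0 < a * b -> a * b <= 3 ->
  a = -1 \/ a = -2 \/ a = -3.
Proof.
move=> a_le0 b_le0 ab_gt0 ab_le3.
have a_le1 : a <= -1 by nia.
have b_le1 : b <= -1 by nia.
have : -3 <= a by nia.
lia.
Qed.

Lemma cartan_pair_cases (a b : int) m :
  a <= 0 -> b <= 0 -> (a == 0) = (b == 0) -> coxeter_m (a * b) = Some m ->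
  (a = 0 /\ b = 0 /\ m = 2%N) \/ (a = -1 /\ b = -1 /\ m = 3%N) \/
  (a = -2 /\ b = -1 /\ m = 4%N) \/ (a = -1 /\ b = -2 /\ m = 4%N) \/
  (a = -3 /\ b = -1 /\ m = 6%N) \/ (a = -1 /\ b = -3 /\ m = 6%N).
Proof.
move=> a_le0 b_le0 ab0; rewrite /coxeter_m.
case: eqP => [ab_eq [<-]|_].
  have /eqP a0 : a == 0 by rewrite -[a == 0]orbb {2}ab0 -mulf_eq0 ab_eq.
  have /eqP b0 : b == 0 by rewrite -ab0 a0.
  by left.
case: eqP => [ab_eq [<-]|_]; last case: eqP => [ab_eq [<-]|_];
  last case: eqP => [ab_eq [<-]|//].
all: have := neg_factor_cases a_le0 b_le0; rewrite ab_eq => /(_ isT isT) [|[|]] a_eq.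
all: by rewrite a_eq in ab_eq *; lia.
Qed.

Lemma rank2_admissible_rmorph (F E : fieldType) (f : {rmorphism F -> E}) aij aji uij uji m :
  rank2_admissible aij aji uij uji m -> rank2_admissible aij aji (f uij) (f uji) m.
Proof.
case=> [[-> -> -> -> ->]|[-> -> -> ->]|[-> -> uij_eq ->]|[-> -> uij_eq ->]].
- by constructor 1; rewrite rmorph0.
- by constructor 2; rewrite rmorphN.
- constructor 3; split=> //.
  by case: uij_eq => ->; [left|right]; rewrite rmorphN ?rmorphM ?rmorph_nat.
- constructor 4; split=> //.
  by case: uij_eq => ->; [constructor 1|constructor 2|constructor 3|constructor 4];
    rewrite rmorphN ?rmorphM ?fmorphV ?rmorph_nat.
Qed.

Lemma gcm_rank2_admissible n (A : 'M[int]_n) (U : 'M[CC]_n) i j m :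
  is_gcm A -> admissible_U A U -> i != j -> coxeter_m (A i j * A j i) = Some m ->
  rank2_admissible (A i j) (A j i) (U i j) (U j i) m \/
  rank2_admissible (A j i) (A i j) (U j i) (U i j) m.
Proof.
case=> _ A_le0 A_eq0 [U0 U1 U2 U3] ij hm.
have ji : j != i by rewrite eq_sym.
have eq0 : (A i j == 0) = (A j i == 0) by apply/eqP/eqP => /A_eq0.
case: (cartan_pair_cases (A_le0 _ _ ij) (A_le0 _ _ ji) eq0 hm)
  => [[aij [aji ->]]|[[aij [aji ->]]|[[aij [aji ->]]|[[aij [aji ->]]|
      [[aij [aji ->]]|[aij [aji ->]]]]]]].
- by left; constructor 1; split=> //; apply: U0; rewrite ?aij ?aji eqxx orbT.
- by left; constructor 2; split=> //; apply: U1.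
- by left; constructor 3; split=> //; apply: U2.
- by right; constructor 3; split=> //; apply: U2.
- by left; constructor 4; split=> //; apply: U3.
- by right; constructor 4; split=> //; apply: U3.
Qed.

Theorem theorem1 (n : nat) (A : 'M[int]_n) (U : 'M[CC]_n) :
  is_gcm A -> admissible_U A U ->
  (forall i : 'I_n, exists s : {rmorphism RatF n -> RatF n}, is_s A U i s) /\
  (forall s : 'I_n -> {rmorphism RatF n -> RatF n},
     (forall i, is_s A U i (s i)) ->
     (forall i (x : RatF n), s i (s i x) = x) /\
     (forall i j (m : nat), i != j -> coxeter_m (A i j * A j i) = Some m ->
        forall x : RatF n, iter m (fun y => s i (s j y)) x = x)).
Proof.
move=> gcm admU; have [Aii _ _] := gcm; have [U0 _ _ _] := admU.
have Uii i : U i i = 0 by apply: U0; rewrite eqxx.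
split=> [i|s s_refl]; first by exists (reflection (Aii i) (Uii i)); exact: reflection_is_s.
split=> [i x|i j m ij hm]; first exact: s_involutive.
case: (gcm_rank2_admissible gcm admU ij hm) => /(rank2_admissible_rmorph (cst n)) adm.
  exact: coxeter_pair_relation.
exact/coxeter_relation_sym/coxeter_pair_relation.
Qed.
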